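(* Let $S$ be a $1$-synchronizable system. Let $\tau\in T_0(S)$ and $a_1,\dots,a_n\in\Sigma_M$ be such that $\tau\cdot !a_1\cdots !a_n\in T_n(S)$ and $\mathrm{src}(a_i)=\mathrm{src}(a_j)$ for all $i,j\in\{1,\dots,n\}$. Then $\tau\cdot !?a_1\cdots !?a_n\in T_0(S)$.
   Context: A message set $M=(\Sigma_M,N,\mathrm{src},\mathrm{dst})$: finite set of messages, $N\ge1$ peers, $\mathrm{src}(a)\neq\mathrm{dst}(a)\in\{1,\dots,N\}$. Actions $!a$ (by peer $\mathrm{src}(a)$), $?a$ (by peer $\mathrm{dst}(a)$); traces are finite action sequences; $!?a$ abbreviates $!a\cdot?a$. For a trace $\tau$, $\pi_!(\tau)$ is the sequence of sent messages; $\mathrm{buf}_{i\to j}(\tau)$ is the word $w$ (if any) with (sent on $i\to j$) $=$ (received on $i\to j$)$\cdot w$. $\tau$ is FIFO ($k$-bounded FIFO) if for all $i,j$ and prefixes $\tau'$, $\mathrm{buf}_{i\to j}(\tau')$ is defined (and has length $\le k$); synchronous if of the form $!?a_1\cdots!?a_k$. A system $S=(P_1,\dots,P_N)$: finite automata $P_i$ (all states accepting) over actions of peer $i$, with one FIFO channel per ordered pair $i\neq j$. A configuration: one control state per peer and contents $w_{i,j}$ of channels; stable if all channels empty. $!a$ ($\mathrm{src}(a)=i,\mathrm{dst}(a)=j$) moves $P_i$ and appends $a$ to $w_{i,j}$; $?a$ moves $P_j$ and removes $a$ from the head of $w_{i,j}$; $c_0$ is the initial configuration. $T_k(S)$ ($k\ge1$):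 $k$-bounded FIFO traces $\tau$ with $c_0\xrightarrow{\tau}c$ for some $c$; $T_0(S)$: synchronous such traces; $T_\omega(S)=\bigcup_kT_k(S)$. $ST_k(S)=\{\pi_!(\tau)\mid\tau\in T_k(S)\}\cup\{(\pi_!(\tau),c)\mid c_0\xrightarrow{\tau}c,\ c\text{ stable},\ \tau\in T_k(S)\}$; $S$ is $1$-synchronizable if $ST_0(S)=ST_1(S)$. (Here $n$ in the claim denotes a number of messages, not the number of peers.) *)

From mathcomp Require Import all_boot.
Set Implicit Arguments. Unset Strict Implicit. Unset Printing Implicit Defensive.

(* A message set M = (Sigma_M, N, src, dst). Peers are 'I_N (i.e. {0..N-1}). *)
Record msgset := MsgSet {
  msg : finType;
  npeers : nat;
  npeers_pos : 0 < npeers;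
  src : msg -> 'I_npeers;
  dst : msg -> 'I_npeers;
  src_neq_dst : forall a, src a != dst a
}.

Inductive action (T : Type) := Snd of T | Rcv of T.
Arguments Snd {T}. Arguments Rcv {T}.

Section Defs.
Variable Ms : msgset.
Notation M := (msg Ms).
Notation N := (npeers Ms).

Definition actor (x : action M) : 'I_N :=
  match x with Snd a => src a | Rcv a => dst a end.

Definition pi_send (tau : seq (action M)) : seq M :=
  pmap (fun x => if x is Snd a then Some a else None) tau.

Definition sent_on (i j : 'I_N) (tau : seq (action M)) : seq M :=
  pmap (fun x => if x is Snd a then
                   (if (src a == i) && (dst a == j) then Some a else None)
                 else None) tau.
Definition recv_on (i j : 'I_N) (tau : seq (action M)) : seq M :=
  pmap (fun x => if x is Rcv a then
                   (if (src a == i) && (dst a == j) then Some a else None)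
                 else None) tau.

(* k-bounded FIFO trace: for every prefix and channel, buf is defined
   (sent = received ++ w) and |w| <= k. *)
Definition kbounded_fifo (k : nat) (tau : seq (action M)) : Prop :=
  forall (m : nat) (i j : 'I_N), exists w : seq M,
    sent_on i j (take m tau) = recv_on i j (take m tau) ++ w /\ size w <= k.

Definition sync_word (s : seq M) : seq (action M) :=
  flatten [seq [:: Snd a; Rcv a] | a <- s].
Definition synchronous (tau : seq (action M)) : Prop :=
  exists s : seq M, tau = sync_word s.

(* A system: one finite automaton per peer (all states accepting).  All
   peers' state spaces are taken inside a common finite type [state]; each
   automaton only has transitions labelled by actions of its own peer. *)
Record system := System {
  state : finType;
  init : 'I_N -> state;
  trans : 'I_N -> state -> action M -> state -> bool;
  trans_own : forall i q x q', trans i q x q' -> actor x = i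
}.

Arguments trans : clear implicits.
Arguments init : clear implicits.
Variable Sys : system.

Record config := Config {
  cst : {ffun 'I_N -> state Sys};
  cch : {ffun 'I_N * 'I_N -> seq M}
}.

Definition c0 : config := Config [ffun i => init Sys i] [ffun _ => [::]].

Definition stable (c : config) : Prop := forall p, cch c p = [::].

Inductive step : config -> action M -> config -> Prop :=
| step_send (a : M) (c : config) (q' : state Sys) :
    trans Sys (src a) (cst c (src a)) (Snd a) q' ->
    step c (Snd a)
      (Config [ffun k => if k == src a then q' else cst c k]
              [ffun p => if p == (src a, dst a) then rcons (cch c p) a
                         else cch c p])
| step_recv (a : M) (c : config) (w : seq M) (q' : state Sys) :
    cch c (src a, dst a) = a :: w ->
    trans Sys (dst a) (cst c (dst a)) (Rcv a) q' ->
    step c (Rcv a)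
      (Config [ffun k => if k == dst a then q' else cst c k]
              [ffun p => if p == (src a, dst a) then w else cch c p]).

Inductive run : config -> seq (action M) -> config -> Prop :=
| run_nil c : run c [::] c
| run_cons c x c' tau c'' : step c x c' -> run c' tau c'' -> run c (x :: tau) c''.

Definition T (k : nat) (tau : seq (action M)) : Prop :=
  (if k is 0 then synchronous tau else kbounded_fifo k tau) /\
  exists c, run c0 tau c.

(* ST_k(S), elements of the (disjoint) union encoded in a sum type. *)
Definition ST (k : nat) (x : seq M + (seq M * config)) : Prop :=
  match x with
  | inl w => exists tau, T k tau /\ pi_send tau = w
  | inr (w, c) => exists tau, T k tau /\ pi_send tau = w /\ run c0 tau c /\ stable c
  end.

Definition one_synchronizable : Prop := forall x, ST 0 x <-> ST 1 x.

End Defs.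

From mathcomp Require Import all_boot.
Set Implicit Arguments. Unset Strict Implicit. Unset Printing Implicit Defensive.

(* By induction on k, tau.!?a_1...!?a_k is a synchronous run.  Appending
   !a_(k+1) keeps it executable: a send is always enabled on the channels, and
   the common sender p only has to replay its own projection tau|p.!a_1...!a_(k+1),
   which it performs in the given run of tau.!a_1...!a_n (the receptions ?a_i
   belong to other peers, as dst a_i <> p).  The extended trace is 1-bounded, so
   1-synchronizability provides a synchronous run with the same sends, and the
   only synchronous trace with these sends is tau.!?a_1...!?a_(k+1). *)

Section SynchronousWords.
Variable Ms : msgset.
Notation M := (msg Ms).

Lemma sync_word_cat (s t : seq M) : sync_word (s ++ t) = sync_word s ++ sync_word t.
Proof. by rewrite /sync_word map_cat flatten_cat. Qed.

Lemma pi_send_cat (u v : seq (action M)) : pi_send (u ++ v) = pi_send u ++ pi_send v.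
Proof. exact: pmap_cat. Qed.

Lemma sent_on_cat i j (u v : seq (action M)) :
  sent_on i j (u ++ v) = sent_on i j u ++ sent_on i j v.
Proof. exact: pmap_cat. Qed.

Lemma recv_on_cat i j (u v : seq (action M)) :
  recv_on i j (u ++ v) = recv_on i j u ++ recv_on i j v.
Proof. exact: pmap_cat. Qed.

Lemma pi_send_sync_word (s : seq M) : pi_send (sync_word s) = s.
Proof. by elim: s => //= a s IHs; rewrite /pi_send /= -/(pi_send _) IHs. Qed.

Lemma sent_on_sync_word i j (s : seq M) :
  sent_on i j (sync_word s) = recv_on i j (sync_word s).
Proof.
elim: s => //= a s IHs; rewrite /sent_on /recv_on /= -/(sent_on _ _ _) -/(recv_on _ _ _).
by rewrite IHs; case: ifP.
Qed.

Lemma take_sync_word_send (s : seq M) a m :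
  exists s' b n, take m (sync_word s ++ [:: Snd a]) = sync_word s' ++ take n [:: Snd b].
Proof.
elim: s m => [|c s IHs] m; first by exists [::], a, m.
case: m => [|[|m]]; first by exists [::], a, 0.
  by exists [::], c, 1.
have [s' [b [n E]]] := IHs m.
by exists (c :: s'), b, n; rewrite /= E.
Qed.

Lemma kbounded_fifo1_sync_word_send (s : seq M) a :
  kbounded_fifo 1 (sync_word s ++ [:: Snd a]).
Proof.
move=> m i j; have [s' [b [n ->]]] := take_sync_word_send s a m.
exists (sent_on i j (take n [:: Snd b])).
rewrite sent_on_cat recv_on_cat sent_on_sync_word -catA.
by split; case: n => [|n] //=; rewrite /sent_on /=; case: ifP.
Qed.

End SynchronousWords.

Section LocalRuns.
Variable Ms : msgset.
Variable S : system Ms.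
Notation M := (msg Ms).
Notation peer := 'I_(npeers Ms).
Notation channels := {ffun peer * peer -> seq M}.

Definition proj (i : peer) (u : seq (action M)) := [seq x <- u | actor x == i].

Lemma proj_cat i u v : proj i (u ++ v) = proj i u ++ proj i v.
Proof. exact: filter_cat. Qed.

Lemma proj_map_Snd i (s : seq M) :
  {in s, forall a, src a = i} -> proj i (map Snd s) = map Snd s.
Proof. by move=> Hs; apply/all_filterP; rewrite all_map; apply/allP=> a /Hs /= ->. Qed.

Lemma proj_sync_word i (s : seq M) :
  {in s, forall a, src a = i} -> proj i (sync_word s) = map Snd s.
Proof.
elim: s => //= a s IHs Hs.
have Ha : src a = i by apply: Hs; rewrite mem_head.
have Hdst : (dst a == i) = false by rewrite -Ha eq_sym (negbTE (src_neq_dst a)).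
rewrite /proj /= -/(proj _ _) Ha eqxx Hdst IHs // => b Hb.
by apply: Hs; rewrite in_cons Hb orbT.
Qed.

Inductive local_run (i : peer) : state S -> seq (action M) -> state S -> Prop :=
| local_run_nil q : local_run i q [::] q
| local_run_cons q x q1 u q' :
    trans i q x q1 -> local_run i q1 u q' -> local_run i q (x :: u) q'.

Lemma local_run_prefix i q u v q' : local_run i q (u ++ v) q' -> exists q1, local_run i q u q1.
Proof.
elim: u q => [|x u IHu] q; first by exists q; constructor.
move=> Hrun; inversion_clear Hrun as [|? ? q1 ? ? Htr Hrest].
have [q2 Hu] := IHu _ Hrest; exists q2; exact: local_run_cons Htr Hu.
Qed.

Definition chan_step (ch : channels) (x : action M) : option channels :=
  match x with
  | Snd a => Some [ffun p => if p == (src a, dst a) then rcons (ch p) a else ch p]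
  | Rcv a => if ch (src a, dst a) is b :: w then
               if b == a then Some [ffun p => if p == (src a, dst a) then w else ch p]
               else None
             else None
  end.

Fixpoint chan_run (ch : channels) (u : seq (action M)) : option channels :=
  if u is x :: u' then obind (chan_run^~ u') (chan_step ch x) else Some ch.

Lemma chan_run_cat ch u v : chan_run ch (u ++ v) = obind (chan_run^~ v) (chan_run ch u).
Proof. by elim: u ch => //= x u IHu ch; case: (chan_step ch x). Qed.

Lemma run_local_runs (c c' : config S) u : run c u c' ->
  chan_run (cch c) u = Some (cch c') /\
  forall i, local_run i (cst c i) (proj i u) (cst c' i).
Proof.
elim=> {c u c'} [c|c x c1 u c' Hstep _ [IHch IHloc]]; first by split=> // i; constructor.
case: Hstep IHch IHloc => [a c2 q' Htr|a c2 w q' Hw Htr] /= IHch IHloc.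
all: split=> [|i]; rewrite ?Hw ?eqxx //.
all: have := IHloc i; rewrite ffunE /proj /= eq_sym.
all: by case: eqP => [<-|//]; exact: local_run_cons.
Qed.

Lemma local_runs_run c u (st : {ffun peer -> state S}) ch :
  chan_run (cch c) u = Some ch ->
  (forall i, local_run i (cst c i) (proj i u) (st i)) -> run c u (Config st ch).
Proof.
elim: u c => [|x u IHu] [st0 ch0] /= Hch Hloc.
  have -> : st = st0 by apply/ffunP=> i; have := Hloc i => Hi; inversion Hi.
  by case: Hch => ->; constructor.
have [q1 Htr Hrest] : exists2 q1, trans (actor x) (st0 (actor x)) x q1 &
    local_run (actor x) q1 (proj (actor x) u) (st (actor x)).
  have := Hloc (actor x); rewrite /proj /= eqxx => Hx.
  by inversion_clear Hx as [|? ? q1 ? ? Htr Hrest]; exists q1.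
have Hother i : actor x != i -> local_run i (st0 i) (proj i u) (st i).
  by move=> /negbTE Hi; have := Hloc i; rewrite /proj /= Hi.
clear Hloc; case: x Hch Htr Hrest Hother => a /= Hch Htr Hrest Hother.
  apply: run_cons; first exact: (step_send (c := Config st0 ch0) Htr).
  apply: IHu => // i /=.
  by rewrite ffunE eq_sym; case: eqP => [<-|/eqP]; [exact: Hrest | exact: Hother].
move: Hch; case Ehd: (ch0 (src a, dst a)) => [//|b w]; case: eqP => // Eba Hch; subst b.
apply: run_cons; first exact: (step_recv (c := Config st0 ch0) Ehd Htr).
apply: IHu => // i /=.
by rewrite ffunE eq_sym; case: eqP => [<-|/eqP]; [exact: Hrest | exact: Hother].
Qed.

Lemma run_rcons_send (c c1 c2 : config S) u v a w :
  run c u c1 -> run c v c2 ->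
  proj (src a) u = proj (src a) (rcons v (Snd a)) ++ w ->
  exists c3, run c (rcons v (Snd a)) c3.
Proof.
move=> /run_local_runs[_ Hu] /run_local_runs[Hch Hv] Eu.
have := Hu (src a); rewrite Eu => /local_run_prefix[q Hq].
exists (Config [ffun i => if i == src a then q else cst c2 i]
  [ffun p => if p == (src a, dst a) then rcons (cch c2 p) a else cch c2 p]).
apply: local_runs_run => [|i]; first by rewrite -cats1 chan_run_cat Hch.
rewrite ffunE; case: eqP => [->//|/eqP Hi].
by rewrite /proj filter_rcons /= eq_sym (negbTE Hi); exact: Hv.
Qed.

End LocalRuns.

Lemma one_synchronizable_T1 (Ms : msgset) (S : system Ms) (u : seq (action (msg Ms))) :
  one_synchronizable S -> T S 1 u -> T S 0 (sync_word (pi_send u)).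
Proof.
move=> sync1 Hu; have [_ /(_ (ex_intro _ u (conj Hu erefl)))] := sync1 (inl (pi_send u)).
case=> _ [[[s ->] Hrun]]; rewrite pi_send_sync_word => <-.
by split; [exists s | ].
Qed.

Section SendsBecomeSynchronous.
Variable Ms : msgset.
Variable S : system Ms.
Notation M := (msg Ms).
Variables (s0 bs : seq M) (cY : config S).
Hypothesis sync1 : one_synchronizable S.
Hypothesis run_sends : run (c0 S) (sync_word s0 ++ map Snd bs) cY.
Hypothesis same_src : forall a b, a \in bs -> b \in bs -> src a = src b.

Lemma T0_sync_word_rcons u a w :
  bs = u ++ a :: w -> T S 0 (sync_word (s0 ++ u)) -> T S 0 (sync_word (s0 ++ rcons u a)).
Proof.
move=> Ebs [_ [cX run_sync]].
have Hsrc : {in bs, forall b, src b = src a}.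
  by move=> b Hb; apply: same_src; rewrite // Ebs mem_cat mem_head orbT.
have := @one_synchronizable_T1 _ _ (sync_word (s0 ++ u) ++ [:: Snd a]) sync1.
rewrite pi_send_cat pi_send_sync_word /= -cats1 -catA; apply; split.
  exact: kbounded_fifo1_sync_word_send.
rewrite cats1; apply: (run_rcons_send (w := map Snd w) run_sends run_sync).
rewrite proj_cat proj_map_Snd // -cats1 !proj_cat sync_word_cat proj_cat.
rewrite [proj _ (sync_word u)]proj_sync_word /=; last first.
  by move=> b Hb; apply: Hsrc; rewrite Ebs mem_cat Hb.
by rewrite eqxx Ebs map_cat -!catA.
Qed.

End SendsBecomeSynchronous.

Theorem lemma4p4 (Ms : msgset) (S : system Ms) (tau : seq (action (msg Ms)))
    (as_ : seq (msg Ms)) :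
  one_synchronizable S ->
  T S 0 tau ->
  T S (size as_) (tau ++ [seq Snd a | a <- as_]) ->
  (forall a b, a \in as_ -> b \in as_ -> src a = src b) ->
  T S 0 (tau ++ sync_word as_).
Proof.
move=> sync1 Htau [_ [cY run_sends]] same_src.
have [[s0 Etau] _] := Htau; subst tau.
suff Hpre u w : as_ = u ++ w -> T S 0 (sync_word (s0 ++ u)).
  by rewrite -sync_word_cat; apply: (Hpre _ [::]); rewrite cats0.
elim/last_ind: u w => [|u a IHu] w Eas; first by rewrite cats0.
rewrite cat_rcons in Eas.
exact: T0_sync_word_rcons sync1 run_sends same_src _ _ _ Eas (IHu _ Eas).
Qed.
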